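(* Let $P_1,P_2$ be quantum programs with finite-dimensional state Hilbert spaces $\mathcal{H}_{P_1},\mathcal{H}_{P_2}$, $d_i=\dim\mathcal{H}_{P_i}$, with denotational semantics $\llbracket P_i\rrbracket$. Let $\mathcal{M}_1=\{M_{10},M_{11}\}$ and $\mathcal{M}_2=\{M_{20},M_{21}\}$ be two-outcome measurements on $\mathcal{H}_{P_1}$ and $\mathcal{H}_{P_2}$ respectively, and set $\mathcal{E}_{ij}(X)=M_{ij}XM_{ij}^\dagger$. Let $\rho\in\mathcal{D}^\le(\mathcal{H}_{P_1}\otimes\mathcal{H}_{P_2})$. If $$\mathrm{tr}\big[\mathcal{E}_{10}\circ(\llbracket P_1\rrbracket\circ\mathcal{E}_{11})^n(\mathrm{tr}_{2}(\rho))\big]=\mathrm{tr}\big[\mathcal{E}_{20}\circ(\llbracket P_2\rrbracket\circ\mathcal{E}_{21})^n(\mathrm{tr}_{1}(\rho))\big]$$ holds for every $0\le n\le d_1^2+d_2^2-1$, then it holds for every $n\ge 0$.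
   Context: A quantum program $P$ acts on the tensor product $\mathcal{H}_P$ of the state spaces of its quantum variables; its denotational semantics $\llbracket P\rrbracket$ is a linear map (quantum operation: completely positive, trace non-increasing) on operators on $\mathcal{H}_P$. A (projective) measurement $\{M_m\}$ is a family of operators with $\sum_m M_m^\dagger M_m=I$. $\mathcal{D}^\le(\mathcal{H})$ denotes partial density operators on $\mathcal{H}$; $\mathrm{tr}_1,\mathrm{tr}_2$ denote partial traces over the first and second tensor factor, so $\mathrm{tr}_2(\rho)$ lives on $\mathcal{H}_{P_1}$ and $\mathrm{tr}_1(\rho)$ on $\mathcal{H}_{P_2}$. *)

(* finite-dimensional quantum states as matrices over an
   arbitrary numeric algebraically closed field C (e.g. the complex numbers). *)
From HB Require Import structures.
From mathcomp Require Import all_boot all_order all_algebra.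
Set Implicit Arguments. Unset Strict Implicit. Unset Printing Implicit Defensive.
Import Order.TTheory GRing.Theory Num.Theory.
Local Open Scope ring_scope.

Section QDefs.
Variable C : numClosedFieldType.

Definition adjmx m n (A : 'M[C]_(m, n)) : 'M[C]_(n, m) := (map_mx Num.conj A)^T.

Definition psd n (A : 'M[C]_n) : Prop :=
  forall v : 'cV[C]_n, 0 <= (adjmx v *m A *m v) 0 0.

Definition pdensity n (rho : 'M[C]_n) : Prop := psd rho /\ \tr rho <= 1.

(* H_1 (x) H_2 is indexed by 'I_(d1 * d2), with basis vector |i>|k> at
   index mxvec_index i k. *)

Definition ptrace2 d1 d2 (rho : 'M[C]_(d1 * d2)) : 'M[C]_d1 :=
  \matrix_(i, j) \sum_(k < d2) rho (mxvec_index i k) (mxvec_index j k).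

Definition ptrace1 d1 d2 (rho : 'M[C]_(d1 * d2)) : 'M[C]_d2 :=
  \matrix_(i, j) \sum_(k < d1) rho (mxvec_index k i) (mxvec_index k j).

Definition linear_super d (E : 'M[C]_d -> 'M[C]_d) : Prop :=
  forall (a : C) (X Y : 'M[C]_d), E (a *: X + Y) = a *: E X + E Y.

(* Y is (id_k (x) E)(X), which is
   characterised blockwise: block (a,b) of Y is E applied to block (a,b) of X. *)
Definition completely_positive d (E : 'M[C]_d -> 'M[C]_d) : Prop :=
  forall (k : nat) (X Y : 'M[C]_(k * d)),
    (forall (a b : 'I_k) (i j : 'I_d),
       Y (mxvec_index a i) (mxvec_index b j) =
       E (\matrix_(i', j') X (mxvec_index a i') (mxvec_index b j')) i j) ->
    psd X -> psd Y.

Definition trace_nonincreasing d (E : 'M[C]_d -> 'M[C]_d) : Prop :=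
  forall X : 'M[C]_d, psd X -> \tr (E X) <= \tr X.

Definition quantum_operation d (E : 'M[C]_d -> 'M[C]_d) : Prop :=
  [/\ linear_super E, completely_positive E & trace_nonincreasing E].

Definition measurement2 d (M0 M1 : 'M[C]_d) : Prop :=
  adjmx M0 *m M0 + adjmx M1 *m M1 = 1%:M.

Definition sandwich d (M : 'M[C]_d) (X : 'M[C]_d) : 'M[C]_d :=
  M *m X *m adjmx M.

Definition loop_term d (P : 'M[C]_d -> 'M[C]_d) (M0 M1 : 'M[C]_d)
  (sigma : 'M[C]_d) (n : nat) : C :=
  \tr (sandwich M0 (iter n (fun X => P (sandwich M1 X)) sigma)).
End QDefs.

(* Since P and X |-> M X M^dag are linear, each side is a sequence
   n |-> u A^n w with A the d^2 x d^2 matrix of the super-operator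
   P o E_1 acting on vectorised operators.  The difference of the two sides
   is then u A^n w for the block-diagonal A = diag(A_1, A_2) of size
   N = d_1^2 + d_2^2, and by Cayley-Hamilton every A^(k+N) is a linear
   combination of A^k, ..., A^(k+N-1), so vanishing for n < N propagates to
   all n. *)
From HB Require Import structures.
From mathcomp Require Import all_boot all_order all_algebra.
From mathcomp Require Import zify.
Set Implicit Arguments. Unset Strict Implicit.
Import Order.TTheory GRing.Theory Num.Theory.
Local Open Scope ring_scope.

Section PowerSequences.
Variable R : comNzRingType.

Lemma char_poly_recurrence n (A : 'M[R]_n.+1) k :
  \sum_(i < n.+2) (char_poly A)`_i *: A ^+ (k + i) = 0.
Proof.
have coef_sum : char_poly A = \sum_(i < n.+2) (char_poly A)`_i *: 'X^i.
  by rewrite -poly_def -(size_char_poly A) coefK.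
have expand : horner_mx A (char_poly A) = \sum_(i < n.+2) (char_poly A)`_i *: A ^+ i.
  rewrite {1}coef_sum rmorph_sum /=; apply: eq_bigr => i _.
  by rewrite horner_mxZ rmorphXn /= horner_mx_X.
transitivity (A ^+ k * horner_mx A (char_poly A)).
  by rewrite expand mulr_sumr; apply: eq_bigr => i _; rewrite -scalerAr exprD.
by rewrite Cayley_Hamilton mulr0.
Qed.

Lemma mulmx_exp_eq0 m N p (A : 'M[R]_N) (u : 'M_(m, N)) (w : 'M_(N, p)) :
  (forall i, (i < N)%N -> u *m A ^+ i *m w = 0) ->
  forall i, u *m A ^+ i *m w = 0.
Proof.
case: N A u w => [|n] A u w small i; first by rewrite [w]flatmx0 mulmx0.
have lead1 : (char_poly A)`_n.+1 = 1.
  by have /monicP := char_poly_monic A; rewrite /lead_coef size_char_poly.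
elim/ltn_ind: i => i IH; have [/small // | ge_n1] := ltnP i n.+1.
have := congr1 (fun B => u *m B *m w) (char_poly_recurrence A (i - n.+1)).
rewrite mulmx_sumr mulmx_suml big_ord_recr /= lead1 scale1r subnK //.
rewrite big1 ?add0r ?mulmx0 ?mul0mx // => j _.
by rewrite -scalemxAr -scalemxAl IH ?scaler0 //; have := ltn_ord j; lia.
Qed.

(* The library's exp_block_diag_mx only covers block sizes of the form n.+1. *)
Lemma exp_block_diag_mx' n1 n2 (A1 : 'M[R]_n1) (A2 : 'M[R]_n2) k :
  block_mx A1 0 0 A2 ^+ k = block_mx (A1 ^+ k) 0 0 (A2 ^+ k).
Proof.
elim: k => [|k IH]; first by rewrite !expr0 -scalar_mx_block.
rewrite !exprSr IH -!mulmxE mulmx_block.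
by rewrite !mulmx0 !mul0mx !addr0 !add0r.
Qed.

Lemma mulmx_exp_block_diag m n1 n2 p (A1 : 'M[R]_n1) (A2 : 'M[R]_n2)
    (u1 : 'M_(m, n1)) (u2 : 'M_(m, n2)) (w1 : 'M_(n1, p)) (w2 : 'M_(n2, p)) k :
  row_mx u1 u2 *m block_mx A1 0 0 A2 ^+ k *m col_mx w1 w2 =
  u1 *m A1 ^+ k *m w1 + u2 *m A2 ^+ k *m w2.
Proof.
by rewrite exp_block_diag_mx' mul_row_block !mulmx0 addr0 add0r mul_row_col.
Qed.

Lemma mul_rV_lin1_fun m n (f : 'rV[R]_m -> 'rV[R]_n) :
  linear f -> forall u, u *m lin1_mx f = f u.
Proof.
move=> lin_f u.
pose F : {linear 'rV[R]_m -> 'rV[R]_n} :=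
  HB.pack f (GRing.isLinear.Build _ _ _ _ f lin_f).
exact: (mul_rV_lin1 F).
Qed.

End PowerSequences.

Section SuperOperatorMatrices.
Variables (C : numClosedFieldType) (d : nat).
Implicit Types (E : 'M[C]_d -> 'M[C]_d) (M X : 'M[C]_d).

Definition superop_mx E : 'M[C]_(d * d) :=
  lin1_mx (fun u => mxvec (E (vec_mx u))).

Definition trace_sandwich_cV M : 'cV[C]_(d * d) :=
  lin1_mx (fun u => (\tr (sandwich M (vec_mx u)))%:M : 'rV_1).

Lemma sandwich_linear M : linear_super (sandwich M).
Proof. by move=> a X Y; rewrite /sandwich mulmxDr mulmxDl -scalemxAr -scalemxAl. Qed.

Lemma mxvec_superop E X : linear_super E -> mxvec (E X) = mxvec X *m superop_mx E.
Proof.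
move=> lin_E; rewrite mul_rV_lin1_fun ?mxvecK // => a u v.
by rewrite linearP /= lin_E linearP.
Qed.

Lemma mxvec_iter_superop E X k :
  linear_super E -> mxvec (iter k E X) = mxvec X *m superop_mx E ^+ k.
Proof.
move=> lin_E; elim: k => [|k IH] /=; first by rewrite expr0 mulmx1.
by rewrite mxvec_superop // IH exprSr mulmxA.
Qed.

Lemma trace_sandwichE M X :
  \tr (sandwich M X) = (mxvec X *m trace_sandwich_cV M) 0 0.
Proof.
rewrite mul_rV_lin1_fun ?mxvecK ?mxE ?mulr1n // => a u v.
by rewrite linearP /= sandwich_linear linearP /= raddfD /= scale_scalar_mx.
Qed.

Lemma loop_termE P M0 M1 sigma k : linear_super P ->
  loop_term P M0 M1 sigma k =
  (mxvec sigma *m superop_mx (P \o sandwich M1) ^+ k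
               *m trace_sandwich_cV M0) 0 0.
Proof.
move=> lin_P; rewrite /loop_term trace_sandwichE -mxvec_iter_superop //.
by move=> a X Y /=; rewrite sandwich_linear lin_P.
Qed.

End SuperOperatorMatrices.

Theorem lemma5p5 (C : numClosedFieldType) (d1 d2 : nat)
  (P1 : 'M[C]_d1 -> 'M[C]_d1) (P2 : 'M[C]_d2 -> 'M[C]_d2)
  (M10 M11 : 'M[C]_d1) (M20 M21 : 'M[C]_d2) (rho : 'M[C]_(d1 * d2)) :
  quantum_operation P1 -> quantum_operation P2 ->
  measurement2 M10 M11 -> measurement2 M20 M21 ->
  pdensity rho ->
  (forall n : nat, (n <= d1 ^ 2 + d2 ^ 2 - 1)%N ->
     loop_term P1 M10 M11 (ptrace2 rho) n = loop_term P2 M20 M21 (ptrace1 rho) n) ->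
  forall n : nat,
     loop_term P1 M10 M11 (ptrace2 rho) n = loop_term P2 M20 M21 (ptrace1 rho) n.
Proof.
move=> [lin_P1 _ _] [lin_P2 _ _] _ _ _ eq_small n.
pose A := block_mx (superop_mx (P1 \o sandwich M11)) 0 0
                   (superop_mx (P2 \o sandwich M21)).
pose u := row_mx (mxvec (ptrace2 rho)) (mxvec (ptrace1 rho)).
pose w := col_mx (trace_sandwich_cV M10) (- trace_sandwich_cV M20).
have diffE k : loop_term P1 M10 M11 (ptrace2 rho) k
             - loop_term P2 M20 M21 (ptrace1 rho) k = (u *m A ^+ k *m w) 0 0.
  by rewrite !loop_termE // mulmx_exp_block_diag mulmxN -!trace_mx11 raddfB.
have vanish : forall i, (i < d1 * d1 + d2 * d2)%N -> u *m A ^+ i *m w = 0.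
  move=> i lt_i; apply/matrixP => a b; rewrite !ord1 -diffE eq_small ?subrr ?mxE //.
  by rewrite -!mulnn; lia.
by apply/eqP; rewrite -subr_eq0 diffE (mulmx_exp_eq0 vanish) mxE.
Qed.
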